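(* There is an absolute constant $C$ such that for every odd prime $p$ and every integer $n\ge2$, if $X$ is uniform on $\{0,1\}^{n-1}$, then $$\mathbb{E}_X\big[q_p(|X|)\big]\le\tfrac12-\tfrac1\pi+\tfrac1{2p}+Cp^{3/2}e^{-n/p^2},$$ where for an integer $k$, $q_p(k)=\sin^2\!\big(-\tfrac\pi4+\tfrac{\pi}{p}k\big)$ if $(k\bmod p)<p/2$ and $q_p(k)=\cos^2\!\big(-\tfrac\pi4+\tfrac{\pi}{p}k\big)$ otherwise.
   Context: $|X|$ is the Hamming weight of $X$ and $k\bmod p\in\{0,\dots,p-1\}$. (Equivalently, $q_p(|x|)$ is the probability that a bit $Y_x$ with $\Pr[Y_x=\mathrm{parity}(x)]=\cos^2(-\pi/4+\pi|x|/p)$ differs from $\mathrm{majmod}_p(x)\oplus\mathrm{parity}(x)$.) *)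

From Stdlib Require Import Reals Lra Lia List.
Open Scope R_scope.

Fixpoint cube (m : nat) : list (list bool) :=
  match m with
  | O => nil :: nil
  | S m' => map (cons false) (cube m') ++ map (cons true) (cube m')
  end.

Definition hweight (x : list bool) : nat := count_occ Bool.bool_dec x true.

(* q_p(k) for an integer k; k mod p taken in {0,...,p-1} (Z.modulo, p > 0). *)
Definition q (p : nat) (k : Z) : R :=
  let theta := - PI / 4 + PI / INR p * IZR k in
  if Rlt_dec (IZR (Z.modulo k (Z.of_nat p))) (INR p / 2)
  then (sin theta) ^ 2 else (cos theta) ^ 2.

Definition unif_exp (m : nat) (f : list bool -> R) : R :=
  fold_right Rplus 0 (map f (cube m)) / 2 ^ m.

From Stdlib Require Import Reals Lra Lia ZArith Znumtheory List.
Open Scope R_scope.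

(* Conditioning on the bits one at a time shows E[g(|X|)] = A^(n-1) g (0) for the
   averaging operator (A g)(k) = (g k + g (k+1)) / 2, and g k := q_p(k) is
   p-periodic with values in [0,1].  On mean-zero p-periodic functions,
   E(A h) = E(h) - D(h)/4 for the energy E and Dirichlet form D over a period, and
   the discrete Poincare inequality 12 E <= p^2 D makes A a contraction by the
   factor 1 - 3/p^2 <= exp(-3/p^2); so A^(n-1) g (0) is within
   sqrt(p) exp(-3(n-1)/(2p^2)) of the mean of g over a period.  That mean equals
   1/2 - cot(pi/(2p))/(2p) by a telescoping sine sum, and cot t >= 1/t - 1 on
   (0, 1] gives the bound 1/2 - 1/pi + 1/(2p). *)

Fixpoint sumR (n : nat) (f : nat -> R) : R :=
  match n with O => 0 | S n' => sumR n' f + f n' end.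

Lemma sumR_ext n f g : (forall i, (i < n)%nat -> f i = g i) -> sumR n f = sumR n g.
Proof.
  induction n as [|n IH]; intros Hfg; simpl; [reflexivity|].
  rewrite IH by (intros; apply Hfg; lia). rewrite Hfg by lia. reflexivity.
Qed.

Lemma sumR_plus n f g : sumR n (fun i => f i + g i) = sumR n f + sumR n g.
Proof. induction n as [|n IH]; simpl; [|rewrite IH]; lra. Qed.

Lemma sumR_scal n c f : sumR n (fun i => c * f i) = c * sumR n f.
Proof. induction n as [|n IH]; simpl; [|rewrite IH]; lra. Qed.

Lemma sumR_const n c : sumR n (fun _ => c) = INR n * c.
Proof. induction n as [|n IH]; simpl sumR; [simpl|rewrite IH, S_INR]; lra. Qed.

Lemma sumR_le n f g : (forall i, (i < n)%nat -> f i <= g i) -> sumR n f <= sumR n g.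
Proof.
  induction n as [|n IH]; intros Hfg; simpl; [lra|].
  assert (f n <= g n) by (apply Hfg; lia).
  assert (sumR n f <= sumR n g) by (apply IH; intros; apply Hfg; lia).
  lra.
Qed.

Lemma sumR_nonneg n f : (forall i, (i < n)%nat -> 0 <= f i) -> 0 <= sumR n f.
Proof.
  intros Hf. replace 0 with (sumR n (fun _ => 0)) by (rewrite sumR_const; lra).
  now apply sumR_le.
Qed.

Lemma sumR_succ_l n f : sumR (S n) f = f 0%nat + sumR n (fun i => f (S i)).
Proof. induction n as [|n IH]; simpl in *; [|rewrite IH]; lra. Qed.

Lemma sumR_ge_first n f :
  (0 < n)%nat -> (forall i, (i < n)%nat -> 0 <= f i) -> f 0%nat <= sumR n f.
Proof.
  destruct n as [|n]; [lia|]. intros _ Hf. rewrite sumR_succ_l.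
  assert (0 <= sumR n (fun i => f (S i))) by (apply sumR_nonneg; intros; apply Hf; lia).
  lra.
Qed.

Lemma sumR_add a b f : sumR (a + b) f = sumR a f + sumR b (fun k => f (a + k)%nat).
Proof.
  induction b as [|b IH]; simpl; [rewrite Nat.add_0_r; lra|].
  rewrite Nat.add_succ_r; simpl. rewrite IH. lra.
Qed.

Lemma sumR_swap n m (f : nat -> nat -> R) :
  sumR n (fun i => sumR m (f i)) = sumR m (fun j => sumR n (fun i => f i j)).
Proof.
  induction n as [|n IH]; simpl; [rewrite sumR_const; simpl; lra|].
  rewrite IH, <- sumR_plus. reflexivity.
Qed.

Lemma sumR_telescope h c s :
  sumR s (fun i => h (c + i + 1)%nat - h (c + i)%nat) = h (c + s)%nat - h c.
Proof.
  induction s as [|s IH]; simpl; [rewrite Nat.add_0_r; lra|].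
  rewrite IH. replace (c + s + 1)%nat with (c + S s)%nat by lia. lra.
Qed.

Lemma sumR_cauchy_schwarz s a : (sumR s a) ^ 2 <= INR s * sumR s (fun i => a i ^ 2).
Proof.
  induction s as [|s IH]; cbn [sumR]; [simpl; lra|]. rewrite S_INR.
  set (x := sumR s a) in *. set (Y := sumR s (fun i => a i ^ 2)) in *.
  assert (0 <= Y) by (apply sumR_nonneg; intros; apply pow2_ge_0).
  assert (0 <= INR s) by apply pos_INR.
  (* AM-GM: [s * (2 x a_s) <= x^2 + s^2 a_s^2 <= s (Y + s a_s^2)] *)
  assert (2 * x * a s <= Y + INR s * a s ^ 2).
  { destruct (Nat.eq_dec s 0) as [->|Hs]; [unfold x, Y; simpl; lra|].
    assert (0 < INR s) by (apply lt_0_INR; lia).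
    assert (0 <= (x - INR s * a s) ^ 2) by apply pow2_ge_0.
    apply Rmult_le_reg_l with (INR s); nra. }
  nra.
Qed.

Lemma sumR_id n : sumR n INR = INR n * (INR n - 1) / 2.
Proof.
  induction n as [|n IH]; [simpl; lra|].
  change (sumR (S n) INR) with (sumR n INR + INR n). rewrite IH, S_INR. field.
Qed.

Lemma sumR_sq n : sumR n (fun t => INR t ^ 2) = (INR n - 1) * INR n * (2 * INR n - 1) / 6.
Proof.
  induction n as [|n IH]; [simpl; lra|].
  change (sumR (S n) (fun t => INR t ^ 2)) with (sumR n (fun t => INR t ^ 2) + INR n ^ 2).
  rewrite IH, S_INR. field.
Qed.

Definition periodic (p : nat) (f : nat -> R) := forall k, f (k + p)%nat = f k.

Lemma sumR_periodic_shift p f a :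
  periodic p f -> sumR p (fun j => f (j + a)%nat) = sumR p f.
Proof.
  intros Hf. induction a as [|a IH].
  - apply sumR_ext; intros; rewrite Nat.add_0_r; reflexivity.
  - rewrite <- IH. destruct p as [|p]; [reflexivity|].
    rewrite (sumR_succ_l p (fun j => f (j + a)%nat)). simpl sumR.
    replace (f (0 + a)%nat) with (f (p + S a)%nat)
      by (rewrite <- (Hf (0 + a)%nat); f_equal; lia).
    rewrite (sumR_ext p (fun j => f (j + S a)%nat) (fun i => f (S (i + a)))) by (intros; f_equal; lia).
    lra.
Qed.

Definition energy (p : nat) (h : nat -> R) := sumR p (fun k => h k ^ 2).
Definition dirichlet (p : nat) (h : nat -> R) := sumR p (fun k => (h (S k) - h k) ^ 2).

Lemma energy_nonneg p h : 0 <= energy p h.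
Proof. apply sumR_nonneg; intros; apply pow2_ge_0. Qed.

Lemma dirichlet_nonneg p h : 0 <= dirichlet p h.
Proof. apply sumR_nonneg; intros; apply pow2_ge_0. Qed.

(* Discrete Poincare inequality on the cycle Z/p, with the constant 12 in place
   of the optimal 4 p^2 sin^2 (pi/p). *)
Section Poincare.
Variables (p : nat) (h : nat -> R).
Hypotheses (p_gt0 : (0 < p)%nat) (h_periodic : periodic p h).

Definition shift_gap t := sumR p (fun j => (h j - h (j + t)%nat) ^ 2).

Lemma shift_gap_le_dirichlet a s :
  sumR p (fun j => (h (j + a)%nat - h (j + a + s)%nat) ^ 2) <= INR s ^ 2 * dirichlet p h.
Proof.
  set (d k := h (S k) - h k).
  assert (d_sq_periodic : periodic p (fun k => d k ^ 2)).
  { intro k. unfold d. replace (S (k + p)) with (S k + p)%nat by lia. now rewrite !h_periodic. }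
  apply Rle_trans with (sumR p (fun j => INR s * sumR s (fun i => d (j + a + i)%nat ^ 2))).
  - apply sumR_le; intros j _.
    replace ((h (j + a)%nat - h (j + a + s)%nat) ^ 2) with ((sumR s (fun i => d (j + a + i)%nat)) ^ 2)
      by (unfold d; rewrite (sumR_ext s _ (fun i => h (j + a + i + 1)%nat - h (j + a + i)%nat))
            by (intros; do 2 f_equal; lia);
          rewrite sumR_telescope; ring).
    apply sumR_cauchy_schwarz.
  - rewrite sumR_scal, sumR_swap, (sumR_ext s _ (fun _ => dirichlet p h)), sumR_const; [lra|].
    intros i _. change (dirichlet p h) with (sumR p (fun k => d k ^ 2)).
    rewrite <- (sumR_periodic_shift p _ (a + i) d_sq_periodic).
    apply sumR_ext; intros; do 2 f_equal; lia.
Qed.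

Lemma shift_gap_le t : (t <= p)%nat -> shift_gap t <= INR t * (INR p - INR t) * dirichlet p h.
Proof.
  intros Ht.
  assert (fwd : shift_gap t <= INR t ^ 2 * dirichlet p h).
  { eapply Rle_trans; [|apply (shift_gap_le_dirichlet 0 t)].
    right. apply sumR_ext; intros. now rewrite !Nat.add_0_r. }
  assert (bwd : shift_gap t <= (INR p - INR t) ^ 2 * dirichlet p h).
  { rewrite <- minus_INR by lia.
    eapply Rle_trans; [|apply (shift_gap_le_dirichlet t (p - t))].
    right. apply sumR_ext; intros j _.
    replace (j + t + (p - t))%nat with (j + p)%nat by lia. rewrite h_periodic. ring. }
  pose proof (dirichlet_nonneg p h). pose proof (pos_INR t).
  assert (INR t <= INR p) by (apply le_INR; lia).
  destruct (Rle_dec (INR t) (INR p - INR t)).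
  - assert (0 <= INR t * (INR p - 2 * INR t) * dirichlet p h)
      by (apply Rmult_le_pos; [apply Rmult_le_pos|]; lra). nra.
  - assert (0 <= (INR p - INR t) * (2 * INR t - INR p) * dirichlet p h)
      by (apply Rmult_le_pos; [apply Rmult_le_pos|]; lra). nra.
Qed.

Hypothesis h_mean0 : sumR p h = 0.

Lemma sumR_shift_gap : sumR p shift_gap = 2 * INR p * energy p h.
Proof.
  assert (sq_periodic : periodic p (fun k => h k ^ 2)) by (intro k; now rewrite h_periodic).
  unfold shift_gap. rewrite sumR_swap.
  rewrite (sumR_ext p _ (fun j => INR p * h j ^ 2 + (-2 * h j) * sumR p (fun t => h (t + j)%nat)
                                   + sumR p (fun t => h (t + j)%nat ^ 2))).
  - rewrite !sumR_plus.
    rewrite (sumR_ext p (fun j => -2 * h j * sumR p (fun t => h (t + j)%nat)) (fun _ => 0))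
      by (intros; rewrite sumR_periodic_shift, h_mean0 by assumption; ring).
    rewrite (sumR_ext p (fun j => sumR p (fun t => h (t + j)%nat ^ 2)) (fun _ => energy p h))
      by (intros; apply (sumR_periodic_shift p (fun k => h k ^ 2)), sq_periodic).
    rewrite !sumR_const, sumR_scal. unfold energy. lra.
  - intros j _.
    rewrite (sumR_ext p _ (fun t => h j ^ 2 + (-2 * h j) * h (t + j)%nat + h (t + j)%nat ^ 2))
      by (intros i _; rewrite (Nat.add_comm i); ring).
    rewrite !sumR_plus, sumR_const, sumR_scal. ring.
Qed.

Lemma poincare : 12 * energy p h <= INR p ^ 2 * dirichlet p h.
Proof.
  assert (sumR p shift_gap <= sumR p (fun t => INR t * (INR p - INR t) * dirichlet p h))
    by (apply sumR_le; intros; apply shift_gap_le; lia).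
  rewrite sumR_shift_gap,
    (sumR_ext p _ (fun t => (INR p * dirichlet p h) * INR t + (- dirichlet p h) * INR t ^ 2)),
    sumR_plus, !sumR_scal, sumR_id, sumR_sq in H by (intros; ring).
  pose proof (dirichlet_nonneg p h). pose proof (energy_nonneg p h).
  assert (1 <= INR p) by (apply (le_INR 1); lia).
  nra.
Qed.

End Poincare.

Definition avg (g : nat -> R) (k : nat) : R := (g k + g (S k)) / 2.

Fixpoint avg_iter (m : nat) (g : nat -> R) : nat -> R :=
  match m with O => g | S m' => avg_iter m' (avg g) end.

Lemma avg_iter_ext m : forall g g', (forall i, g i = g' i) -> forall k, avg_iter m g k = avg_iter m g' k.
Proof.
  induction m as [|m IH]; simpl; intros g g' Hg k; [apply Hg|].
  apply IH. intros; unfold avg; now rewrite !Hg.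
Qed.

Lemma avg_iter_lin m : forall a b g1 g2 k,
  avg_iter m (fun i => a * g1 i + b * g2 i) k = a * avg_iter m g1 k + b * avg_iter m g2 k.
Proof.
  induction m as [|m IH]; simpl; intros; [reflexivity|].
  rewrite <- IH. apply avg_iter_ext. intros; unfold avg; field.
Qed.

Lemma avg_iter_const m : forall c k, avg_iter m (fun _ => c) k = c.
Proof.
  induction m as [|m IH]; simpl; intros c k; [reflexivity|].
  transitivity (avg_iter m (fun _ => c) k); [|apply IH].
  apply avg_iter_ext. intros; unfold avg; lra.
Qed.

Section AverageEnergy.
Variable p : nat.
Hypothesis p_ge2 : (2 <= p)%nat.

Lemma periodic_avg h : periodic p h -> periodic p (avg h).
Proof.
  intros Hh k; unfold avg. replace (S (k + p)) with (S k + p)%nat by lia. now rewrite !Hh.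
Qed.

Lemma sumR_avg h : periodic p h -> sumR p (avg h) = sumR p h.
Proof.
  intros Hh. unfold avg.
  rewrite (sumR_ext p _ (fun k => /2 * h k + /2 * h (k + 1)%nat)) by (intros; rewrite Nat.add_1_r; lra).
  rewrite sumR_plus, !sumR_scal, sumR_periodic_shift by exact Hh. lra.
Qed.

Lemma energy_avg h : periodic p h -> energy p (avg h) = energy p h - dirichlet p h / 4.
Proof.
  intros Hh. unfold energy, dirichlet, avg.
  rewrite (sumR_ext p _ (fun k => /2 * h k ^ 2 + /2 * h (k + 1)%nat ^ 2 + (-/4) * (h (S k) - h k) ^ 2))
    by (intros; rewrite Nat.add_1_r; field).
  rewrite !sumR_plus, !sumR_scal, (sumR_periodic_shift p (fun k => h k ^ 2)) by (intro k; now rewrite Hh).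
  lra.
Qed.

Let contraction := 1 - 3 / INR p ^ 2.

Lemma contraction_bounds : 0 <= contraction <= 1.
Proof.
  assert (2 <= INR p) by (apply (le_INR 2); lia).
  assert (0 < 3 / INR p ^ 2 <= 1); [split|unfold contraction; lra].
  - apply Rdiv_lt_0_compat; nra.
  - apply Rmult_le_reg_l with (INR p ^ 2); [nra|]. field_simplify; nra.
Qed.

Lemma energy_avg_le h : periodic p h -> sumR p h = 0 -> energy p (avg h) <= contraction * energy p h.
Proof.
  intros Hh H0. pose proof (poincare p h ltac:(lia) Hh H0).
  assert (0 < INR p) by (apply lt_0_INR; lia).
  assert (3 / INR p ^ 2 * energy p h <= dirichlet p h / 4)
    by (apply Rmult_le_reg_l with (4 * INR p ^ 2); [nra|]; field_simplify; nra).
  rewrite energy_avg by exact Hh. unfold contraction. lra.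
Qed.

Lemma energy_avg_iter_le m : forall h, periodic p h -> sumR p h = 0 ->
  energy p (avg_iter m h) <= contraction ^ m * energy p h.
Proof.
  induction m as [|m IH]; simpl; intros h Hh H0; [lra|].
  pose proof contraction_bounds. pose proof (pow_le contraction m ltac:(lra)).
  eapply Rle_trans; [apply IH; [apply periodic_avg | rewrite sumR_avg]; assumption|].
  replace (contraction * contraction ^ m * energy p h)
    with (contraction ^ m * (contraction * energy p h)) by ring.
  apply Rmult_le_compat_l; [lra|]. now apply energy_avg_le.
Qed.

End AverageEnergy.

Lemma avg_iter_sub_mean_sq p g m :
  (2 <= p)%nat -> periodic p g -> (forall k, 0 <= g k <= 1) ->
  (avg_iter m g 0 - sumR p g / INR p) ^ 2 <= INR p * (1 - 3 / INR p ^ 2) ^ m.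
Proof.
  intros Hp Hg Hg01.
  assert (0 < INR p) by (apply lt_0_INR; lia).
  set (c := sumR p g / INR p).
  assert (c_01 : 0 <= c <= 1).
  { assert (0 <= sumR p g <= INR p * 1).
    { rewrite <- sumR_const. split; [apply sumR_nonneg|apply sumR_le]; intros; apply Hg01. }
    assert (sumR p g = INR p * c) by (unfold c; field; lra). nra. }
  set (h k := g k - c).
  assert (Hdev : avg_iter m g 0 - c = avg_iter m h 0).
  { rewrite (avg_iter_ext m h (fun i => 1 * g i + (- c) * 1)) by (intros; unfold h; ring).
    rewrite avg_iter_lin, avg_iter_const. ring. }
  assert (h_periodic : periodic p h) by (intro k; unfold h; now rewrite Hg).
  assert (h_mean0 : sumR p h = 0).
  { unfold h. rewrite (sumR_ext p _ (fun k => g k + (-1) * c)) by (intros; ring).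
    rewrite sumR_plus, sumR_scal, sumR_const. unfold c. field. lra. }
  assert (h_energy : energy p h <= INR p).
  { rewrite <- (Rmult_1_r (INR p)), <- sumR_const. apply sumR_le. intros i _.
    unfold h. pose proof (Hg01 i). nra. }
  pose proof (energy_avg_iter_le p Hp m h h_periodic h_mean0).
  assert (avg_iter m h 0 ^ 2 <= energy p (avg_iter m h))
    by (apply (sumR_ge_first p (fun k => avg_iter m h k ^ 2)); [lia|intros; apply pow2_ge_0]).
  assert (0 <= (1 - 3 / INR p ^ 2) ^ m) by (apply pow_le, contraction_bounds; exact Hp).
  rewrite Hdev. nra.
Qed.

Lemma pow_one_sub_le_exp x m : 0 <= x <= 1 -> (1 - x) ^ m <= exp (- INR m * x).
Proof.
  intros Hx. replace (- INR m * x) with (INR m * ln (exp (- x))) by (rewrite ln_exp; ring).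
  change (exp (INR m * ln (exp (- x)))) with (Rpower (exp (- x)) (INR m)).
  rewrite Rpower_pow by apply exp_pos.
  apply pow_incr. pose proof (exp_ineq1_le (- x)). lra.
Qed.

Lemma smoothing_tail_le p n : (2 <= p)%nat -> (1 <= n)%nat ->
  INR p * exp (- INR (n - 1) * (3 / INR p ^ 2))
  <= (2 * Rpower (INR p) (3 / 2) * exp (- INR n / INR p ^ 2)) ^ 2.
Proof.
  intros Hp Hn.
  assert (Pp : 2 <= INR p) by (apply (le_INR 2); lia).
  assert (Pn : 1 <= INR n) by (apply (le_INR 1); lia).
  assert (rpow_sq : Rpower (INR p) (3 / 2) ^ 2 = INR p ^ 3).
  { replace (Rpower (INR p) (3 / 2) ^ 2) with (Rpower (INR p) (3 / 2) * Rpower (INR p) (3 / 2))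
      by ring.
    rewrite <- Rpower_plus.
    replace (3 / 2 + 3 / 2) with (INR 3) by (simpl; field). apply Rpower_pow. lra. }
  assert (exp_sq : exp (- INR n / INR p ^ 2) ^ 2 = exp (2 * (- INR n / INR p ^ 2))).
  { replace (exp (- INR n / INR p ^ 2) ^ 2) with (exp (- INR n / INR p ^ 2) * exp (- INR n / INR p ^ 2))
      by ring.
    rewrite <- exp_plus. f_equal. ring. }
  assert (exp_shift : exp (- INR (n - 1) * (3 / INR p ^ 2)) <= 3 * exp (2 * (- INR n / INR p ^ 2))).
  { rewrite minus_INR by lia. simpl INR.
    apply Rle_trans with (exp (1 + 2 * (- INR n / INR p ^ 2))).
    - apply Rlt_le, exp_increasing.
      apply Rmult_lt_reg_l with (INR p ^ 2); [nra|]. field_simplify; [nra|lra|lra].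
    - rewrite exp_plus. pose proof exp_le_3. pose proof (exp_pos (2 * (- INR n / INR p ^ 2))). nra. }
  rewrite !Rpow_mult_distr, rpow_sq, exp_sq.
  apply Rle_trans with (INR p * (3 * exp (2 * (- INR n / INR p ^ 2)))); [apply Rmult_le_compat_l; lra|].
  pose proof (exp_pos (2 * (- INR n / INR p ^ 2))).
  assert (3 * INR p <= 2 ^ 2 * INR p ^ 3) by nra. nra.
Qed.

Lemma avg_iter_le_mean p g n :
  (2 <= p)%nat -> (1 <= n)%nat -> periodic p g -> (forall k, 0 <= g k <= 1) ->
  avg_iter (n - 1) g 0
  <= sumR p g / INR p + 2 * Rpower (INR p) (3 / 2) * exp (- INR n / INR p ^ 2).
Proof.
  intros Hp Hn Hg Hg01.
  set (B := 2 * Rpower (INR p) (3 / 2) * exp (- INR n / INR p ^ 2)).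
  assert (0 <= B).
  { unfold B. pose proof (exp_pos (3 / 2 * ln (INR p))). pose proof (exp_pos (- INR n / INR p ^ 2)).
    unfold Rpower. nra. }
  assert ((avg_iter (n - 1) g 0 - sumR p g / INR p) ^ 2 <= B ^ 2).
  { eapply Rle_trans; [apply avg_iter_sub_mean_sq; assumption|].
    eapply Rle_trans; [|apply smoothing_tail_le; assumption].
    apply Rmult_le_compat_l; [apply pos_INR|]. apply pow_one_sub_le_exp.
    assert (2 <= INR p) by (apply (le_INR 2); lia).
    split; [left; apply Rdiv_lt_0_compat; nra|].
    apply Rmult_le_reg_l with (INR p ^ 2); [nra|]. field_simplify; nra. }
  nra.
Qed.

Lemma fold_Rplus_app l1 l2 :
  fold_right Rplus 0 (l1 ++ l2) = fold_right Rplus 0 l1 + fold_right Rplus 0 l2.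
Proof. induction l1 as [|a l1 IH]; simpl; [|rewrite IH]; lra. Qed.

Lemma sum_cube_hweight m : forall g : nat -> R,
  fold_right Rplus 0 (map (fun x => g (hweight x)) (cube m)) = 2 ^ m * avg_iter m g 0.
Proof.
  induction m as [|m IH]; intros g; [unfold hweight; simpl; lra|].
  simpl cube. rewrite map_app, fold_Rplus_app, !map_map.
  change (fun x => g (hweight (false :: x))) with (fun x => g (hweight x)).
  change (fun x => g (hweight (true :: x))) with (fun x => (fun k => g (S k)) (hweight x)).
  rewrite (IH g), (IH (fun k => g (S k))). simpl avg_iter.
  rewrite (avg_iter_ext m (avg g) (fun i => /2 * g i + /2 * g (S i))) by (intros; unfold avg; lra).
  rewrite avg_iter_lin. simpl. lra.
Qed.

Lemma unif_exp_hweight m g : unif_exp m (fun x => g (hweight x)) = avg_iter m g 0.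
Proof.
  unfold unif_exp. rewrite sum_cube_hweight. field. apply pow_nonzero. lra.
Qed.

Definition qn (p k : nat) : R := q p (Z.of_nat k).

Lemma qn_bounds p k : 0 <= qn p k <= 1.
Proof.
  unfold qn, q. destruct Rlt_dec.
  - pose proof (SIN_bound (- PI / 4 + PI / INR p * IZR (Z.of_nat k))). nra.
  - pose proof (COS_bound (- PI / 4 + PI / INR p * IZR (Z.of_nat k))). nra.
Qed.

(* A shift by [p] moves the angle by [PI], which only changes signs. *)
Lemma qn_periodic p : (0 < p)%nat -> periodic p (qn p).
Proof.
  intros Hp k. unfold qn, q.
  assert (0 < INR p) by (apply lt_0_INR; lia).
  replace (Z.of_nat (k + p) mod Z.of_nat p)%Z with (Z.of_nat k mod Z.of_nat p)%Z.
  - replace (- PI / 4 + PI / INR p * IZR (Z.of_nat (k + p)))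
      with ((- PI / 4 + PI / INR p * IZR (Z.of_nat k)) + PI)
      by (rewrite <- !INR_IZR_INZ, plus_INR; field; lra).
    rewrite neg_sin, neg_cos. destruct Rlt_dec; ring.
  - rewrite Nat2Z.inj_add, <- Z.add_mod_idemp_r, Z.mod_same, Z.add_0_r by lia. reflexivity.
Qed.

Lemma cos_2_sub_pi4 y : cos (2 * (- PI / 4 + y)) = sin (2 * y).
Proof.
  replace (2 * (- PI / 4 + y)) with (2 * y - PI / 2) by field.
  rewrite cos_minus, cos_PI2, sin_PI2. ring.
Qed.

Lemma sin_sq_sub_pi4 y : sin (- PI / 4 + y) ^ 2 = (1 - sin (2 * y)) / 2.
Proof. pose proof (cos_2_sub_pi4 y) as H. rewrite cos_2a_sin in H. nra. Qed.

Lemma cos_sq_sub_pi4 y : cos (- PI / 4 + y) ^ 2 = (1 + sin (2 * y)) / 2.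
Proof. pose proof (cos_2_sub_pi4 y) as H. rewrite cos_2a_cos in H. nra. Qed.

Lemma sumR_sin_telescope x a n :
  2 * sin x * sumR n (fun k => sin (2 * (a + INR k) * x))
  = cos ((2 * a - 1) * x) - cos ((2 * (a + INR n) - 1) * x).
Proof.
  induction n as [|n IH]; [simpl; rewrite Rplus_0_r; ring|].
  cbn [sumR]. rewrite Rmult_plus_distr_l, IH, S_INR.
  replace ((2 * (a + INR n) - 1) * x) with (2 * (a + INR n) * x - x) by ring.
  replace ((2 * (a + (INR n + 1)) - 1) * x) with (2 * (a + INR n) * x + x) by ring.
  rewrite cos_minus, cos_plus. ring.
Qed.

Lemma cot_half_lower_bound x : 0 < x <= 2 -> (2 - x) * sin x <= x * (1 + cos x).
Proof.
  intros Hx. pose proof PI2_3_2.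
  assert (sin x <= x) by (left; apply sin_lt_x; lra).
  assert (1 - x ^ 2 / 2 <= cos x).
  { replace x with (2 * (x / 2)) at 2 by field. rewrite cos_2a_sin.
    assert (0 < sin (x / 2)) by (apply sin_gt_0; lra).
    assert (sin (x / 2) < x / 2) by (apply sin_lt_x; lra). nra. }
  nra.
Qed.

Section OddPeriod.
Variable M : nat.
Let p := (M + 1 + M)%nat.

Let p_eq : INR p = 2 * INR M + 1.
Proof. unfold p. rewrite !plus_INR. simpl. ring. Qed.

Lemma qn_low k : (k < M + 1)%nat -> qn p k = (1 - sin (2 * (0 + INR k) * (PI / INR p))) / 2.
Proof.
  intros Hk. unfold qn, q. rewrite Z.mod_small, <- INR_IZR_INZ by lia.
  destruct Rlt_dec as [_|Hge].
  - rewrite sin_sq_sub_pi4. do 3 f_equal. ring.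
  - exfalso. apply Hge. rewrite p_eq. assert (INR k <= INR M) by (apply le_INR; lia). lra.
Qed.

Lemma qn_high j : (j < M)%nat ->
  qn p (M + 1 + j) = (1 + sin (2 * (INR (M + 1) + INR j) * (PI / INR p))) / 2.
Proof.
  intros Hj. unfold qn, q. rewrite Z.mod_small, <- INR_IZR_INZ by lia.
  destruct Rlt_dec as [Hlt|_].
  - exfalso. revert Hlt. rewrite p_eq, !plus_INR. simpl. pose proof (pos_INR j). lra.
  - rewrite cos_sq_sub_pi4. do 3 f_equal. rewrite (plus_INR (M + 1) j). ring.
Qed.

Lemma sumR_qn_period :
  2 * sin (PI / INR p) * sumR p (qn p) = INR p * sin (PI / INR p) - (1 + cos (PI / INR p)).
Proof.
  set (x := PI / INR p).
  pose proof (pos_INR M).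
  assert (px : (2 * INR M + 1) * x = PI) by (rewrite <- p_eq; unfold x; field; rewrite p_eq; lra).
  change (sumR p (qn p)) with (sumR (M + 1 + M) (qn p)). rewrite sumR_add.
  rewrite (sumR_ext (M + 1) (qn p) (fun k => /2 + (-/2) * sin (2 * (0 + INR k) * x)))
    by (intros; rewrite qn_low by assumption; unfold x; lra).
  rewrite (sumR_ext M (fun k => qn p (M + 1 + k)) (fun j => /2 + /2 * sin (2 * (INR (M + 1) + INR j) * x)))
    by (intros; rewrite qn_high by assumption; unfold x; lra).
  rewrite !sumR_plus, !sumR_scal, !sumR_const.
  assert (low : 2 * sin x * sumR (M + 1) (fun k => sin (2 * (0 + INR k) * x)) = 1 + cos x).
  { rewrite sumR_sin_telescope, plus_INR. simpl INR.
    replace ((2 * 0 - 1) * x) with (- x) by ring.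
    replace ((2 * (0 + (INR M + 1)) - 1) * x) with PI by lra.
    rewrite cos_neg, cos_PI. ring. }
  assert (high : 2 * sin x * sumR M (fun k => sin (2 * (INR (M + 1) + INR k) * x)) = - 1 - cos x).
  { rewrite sumR_sin_telescope, plus_INR. simpl INR.
    replace ((2 * (INR M + 1) - 1) * x) with PI by lra.
    replace ((2 * (INR M + 1 + INR M) - 1) * x) with (- x + 2 * PI) by lra.
    rewrite cos_PI, cos_plus, cos_2PI, sin_2PI, cos_neg. ring. }
  set (A := sumR (M + 1) _) in *. set (B := sumR M _) in *.
  rewrite p_eq, plus_INR. simpl INR. nra.
Qed.

Lemma sumR_qn_le : (1 <= M)%nat -> sumR p (qn p) <= INR p * (1 / 2 - 1 / PI + 1 / (2 * INR p)).
Proof.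
  intros HM.
  assert (3 <= INR p) by (rewrite p_eq; apply (le_INR 1) in HM; simpl in HM; lra).
  set (x := PI / INR p).
  pose proof PI_RGT_0. pose proof PI_4.
  assert (x_pos : 0 < x) by (apply Rdiv_lt_0_compat; lra).
  assert (px : INR p * x = PI) by (unfold x; field; lra).
  assert (x_le2 : x <= 2) by nra.
  assert (sin_pos : 0 < sin x) by (apply sin_gt_0; nra).
  pose proof (cot_half_lower_bound x (conj x_pos x_le2)).
  pose proof sumR_qn_period as Hsum. fold x in Hsum.
  rewrite <- px.
  apply Rmult_le_reg_l with (2 * x * sin x); [nra|].
  field_simplify; nra.
Qed.

End OddPeriod.

Lemma odd_prime_half p : prime (Z.of_nat p) -> p <> 2%nat -> exists M, (1 <= M)%nat /\ p = (M + 1 + M)%nat.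
Proof.
  intros Hp H2. pose proof (prime_ge_2 _ Hp).
  destruct (Nat.Even_or_Odd p) as [[k Hk]|[k Hk]].
  - exfalso. assert (Hdiv : (2 | Z.of_nat p)%Z) by (exists (Z.of_nat k); lia).
    destruct (prime_divisors _ Hp _ Hdiv) as [E|[E|[E|E]]]; lia.
  - exists k. split; lia.
Qed.

Theorem lemma4p3 :
  exists C : R, forall (p n : nat),
    prime (Z.of_nat p) -> p <> 2%nat -> (2 <= n)%nat ->
    unif_exp (n - 1) (fun x => q p (Z.of_nat (hweight x)))
      <= 1 / 2 - 1 / PI + 1 / (2 * INR p)
         + C * Rpower (INR p) (3 / 2) * exp (- INR n / (INR p ^ 2)).
Proof.
  exists 2. intros p n Hprime Hp2 Hn.
  destruct (odd_prime_half p Hprime Hp2) as [M [HM ->]].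
  set (p := (M + 1 + M)%nat).
  assert (0 < INR p) by (apply lt_0_INR; unfold p; lia).
  assert (Hmean : sumR p (qn p) / INR p <= 1 / 2 - 1 / PI + 1 / (2 * INR p)).
  { apply Rmult_le_reg_l with (INR p); [assumption|].
    replace (INR p * (sumR p (qn p) / INR p)) with (sumR p (qn p)) by (field; lra).
    now apply sumR_qn_le. }
  change (fun x => q p (Z.of_nat (hweight x))) with (fun x => qn p (hweight x)).
  rewrite unif_exp_hweight.
  pose proof (avg_iter_le_mean p (qn p) n ltac:(unfold p; lia) ltac:(lia)
                (qn_periodic p ltac:(unfold p; lia)) (qn_bounds p)).
  lra.
Qed.
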